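(* Let $\mathcal S'$ be a finite state space, let $\mathcal A(s)$ be a finite nonempty action set for each $s\in\mathcal S'$, let $\gamma\in(0,1)$, and let $r:\{(s,a):s\in\mathcal S',a\in\mathcal A(s)\}\to\mathbb R$ be a reward with $R_{\max}:=\sup_{s,a}|r(s,a)|<\infty$. Let $\mathcal B:=\{V:\mathcal S'\to\mathbb R \text{ bounded}\}$ with the supremum norm $\|\cdot\|_\infty$. Let $(\Omega,\mathcal F,\mathbb P)$ be a probability space with an increasing filtration $\{\mathcal F_t\}_{t\ge0}$. For each $t\ge 0$ let $\{U^t_{s,a}\}_{(s,a)}$ be a random $(s,a)$-rectangular family of nonempty ambiguity sets $U^t_{s,a}(\omega)\subseteq\Delta(\mathcal S')$ that is $\mathcal F_t$-measurable, and let $\mathcal T^t_{\mathrm{rob}}(\omega)$ be the induced robust Bellman operator $$(\mathcal T^t_{\mathrm{rob}}(\omega)V)(s)=\max_{a\in\mathcal A(s)}\ \min_{P(\cdot\mid s,a)\in U^t_{s,a}(\omega)}\Big\{r(s,a)+\gamma\sum_{s'\in\mathcal S'}P(s'\mid s,a)V(s')\Big\},$$ which is thus $\mathcal F_t$-measurable. Assume the standing assumptions (A1)–(A6) stated in the context. Suppose that, for $\mathbb P$-almost every $\omega\in\Omega$, there is an operator $\mathcal T_\infty(\omega)$ on $\mathcal B$ such that for every bounded set $B\subset\mathcal B$, $$\sup_{V\in B}\|\mathcal T^t_{\mathrm{rob}}(\omega)V-\mathcal T_\infty(\omega)V\|_\infty\longrightarrow 0\quad (t\to\infty).$$ Then $\mathcal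 T_\infty(\omega)$ is a $\gamma$-contraction on $(\mathcal B,\|\cdot\|_\infty)$, and there exists $\Omega_0\subseteq\Omega$ with $\mathbb P(\Omega_0)=1$ such that for every $\omega\in\Omega_0$ and every bounded initial value $V_0(\omega)\in\mathcal B$, the iteration $V_{t+1}(\omega)=\mathcal T^t_{\mathrm{rob}}(\omega)V_t(\omega)$ converges in $\|\cdot\|_\infty$ to the unique fixed point $V^\star(\omega)$ of $\mathcal T_\infty(\omega)$, i.e. $V_t(\omega)\to V^\star(\omega)$ and $\mathcal T_\infty(\omega)V^\star(\omega)=V^\star(\omega)$.
   Context: $\Delta(\mathcal S')$ denotes the probability simplex over $\mathcal S'$. A family of ambiguity sets is $(s,a)$-rectangular if the overall set of transition kernels is the Cartesian product $\prod_{(s,a)}U_{s,a}$, i.e. the next-state distribution is chosen independently for each state–action pair. Setting: there is a finite set of nodes $v$, a mapping $v(s,a)$ assigning each state–action pair to a node, a compact threat-parameter space $\Theta$, credible sets $U_v^t\subseteq\Theta$, and continuous maps $\phi_{s,a}:\Theta\to\Delta(\mathcal S')$ with $U^t_{s,a}=\phi_{s,a}(U^t_{v(s,a)})$. Standing assumptions: (A1) $\gamma\in(0,1)$ and per-step rewards (including any exposure penalty) are uniformly bounded and measurable. (A2) For any $(s,a)$-rectangular family of ambiguity sets, the robust Bellman operator above is a $\gamma$-contraction on $(\mathbb R^{|\mathcal S'|},\|\cdot\|_\infty)$. (A3) The Bayesian posterior of the node parameter $\theta_v$ given the data $\mathcal D_t$ observed up to time $t$ is well defined on the compact $\Theta$,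 and each credible set $U^t_v$ is Borel measurable. (A4) For each node $v$ there is a target $\theta_v^\star\in\Theta$ with $\mathbb P(\theta_v^\star\in U_v^t)\to1$ and $\sup_{\theta,\theta'\in U_v^t}\|\theta-\theta'\|_\infty\to0$ in probability, and there is a random finite time after which $U_v^{t+1}\subseteq U_v^t$ for all $t$. (A5) For every node $v$ and sensing action $a$, the maps $\theta\mapsto\mathbb E_{p(o\mid a,\theta)}[o]$ (expected observation) and $\theta\mapsto p_{\exp}(a,\theta)$ (exposure probability) are continuous on $\Theta$, with an integrable dominating function when the observation space is infinite. (A6) All action sets are finite and a fixed Borel-measurable tie-breaking rule is used for greedy action selection. *)

From HB Require Import structures.
From mathcomp Require Import all_boot all_order all_algebra.
From mathcomp Require Import all_classical all_reals all_analysis.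
Set Implicit Arguments. Unset Strict Implicit. Unset Printing Implicit Defensive.
Import Order.TTheory GRing.Theory Num.Theory.
Local Open Scope classical_set_scope.
Local Open Scope ring_scope.

Section Defs.
Variables (R : realType) (S : finType) (Act : finType).

Definition rb_supn (V : S -> R) : R := \big[Num.max/0]_(s : S) `|V s|.

Definition rb_is_dist (p : S -> R) : Prop :=
  (forall s, 0 <= p s) /\ \sum_(s : S) p s = 1.

Definition rect_family (A : S -> {set Act}) (U : S -> Act -> set (S -> R)) : Prop :=
  forall s a, a \in A s -> (U s a !=set0) /\ (U s a `<=` rb_is_dist).

(** robust Bellman operator: max over a in A(s) (finite, nonempty: the sup
    of a finite nonempty set is its max) of the min (inf) over P in U_{s,a}
    of r(s,a) + gamma * sum_{s'} P(s') V(s'). *)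
Definition rob_bellman (A : S -> {set Act}) (r : S -> Act -> R) (gamma : R)
  (U : S -> Act -> set (S -> R)) (V : S -> R) : S -> R :=
  fun s => sup [set (inf [set r s a + gamma * \sum_(s' : S) p s' * V s' | p in U s a])
               | a in [set a | a \in A s]].

Definition gamma_contraction (gamma : R) (T : (S -> R) -> (S -> R)) : Prop :=
  forall V W, rb_supn (fun s => T V s - T W s) <= gamma * rb_supn (fun s => V s - W s).

Definition rb_bounded (B : set (S -> R)) : Prop :=
  exists M : R, forall V, B V -> rb_supn V <= M.

Definition unif_conv_bounded (Tt : nat -> (S -> R) -> (S -> R))
  (T : (S -> R) -> (S -> R)) : Prop :=
  forall B, rb_bounded B ->
    forall e : R, 0 < e -> exists N : nat, forall t, (N <= t)%N ->
      forall V, B V -> rb_supn (fun s => Tt t V s - T V s) <= e.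

Fixpoint iterV (Tt : nat -> (S -> R) -> (S -> R)) (V0 : S -> R) (t : nat) : S -> R :=
  match t with
  | O => V0
  | t'.+1 => Tt t' (iterV Tt V0 t')
  end.
End Defs.

Definition rb_filtration d (Omega : measurableType d) (F : nat -> set (set Omega)) : Prop :=
  (forall t, sigma_algebra setT (F t)) /\
  (forall t, F t `<=` measurable) /\
  (forall t u, (t <= u)%N -> F t `<=` F u).

Definition G_measurable d (Omega : measurableType d) (R : realType)
  (G : set (set Omega)) (f : Omega -> R) : Prop :=
  forall B : set R, measurable B -> G (f @^-1` B).

(* The contraction inequality for the operators T_t passes to their limit along
   any pair V, W, so T_oo is a gamma-contraction and has a unique fixed point V*
   (Banach, coordinatewise on the finite state space).  The error
   e_t = ||V_t - V*|| then obeys e_(t+1) <= gamma e_t + ||T_t V* - T_oo V*||, a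
   contracted recursion driven by a vanishing perturbation, hence e_t -> 0 on
   the almost-sure event where T_t -> T_oo. *)
From HB Require Import structures.
From mathcomp Require Import all_boot all_order all_algebra.
From mathcomp Require Import all_classical all_reals all_analysis.
From mathcomp Require Import ring lra.
Import Order.TTheory GRing.Theory Num.Theory.
Import numFieldNormedType.Exports.
Local Open Scope classical_set_scope.
Local Open Scope ring_scope.
Set Implicit Arguments. Unset Strict Implicit.

Local Notation supd V W := (rb_supn (fun s => V s - W s)).

Section SupNorm.
Variables (R : realType) (S : finType).
Implicit Types (V W X : S -> R) (M : R).

Lemma rb_supn_ge0 V : 0 <= rb_supn V.
Proof. by rewrite /rb_supn; elim/big_ind: _ => // x y x0 y0; rewrite le_max x0. Qed.

Lemma ler_rb_supn V s : `|V s| <= rb_supn V.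
Proof. by rewrite /rb_supn (bigD1 s) //= le_max lexx. Qed.

Lemma rb_supn_le V M : 0 <= M -> (forall s, `|V s| <= M) -> rb_supn V <= M.
Proof. by move=> M0 VM; rewrite /rb_supn; elim/big_ind: _ => // x y; rewrite ge_max => ->. Qed.

Lemma supd_sym V W : supd V W = supd W V.
Proof. by apply: eq_bigr => s _; rewrite distrC. Qed.

Lemma supd_triangle V W X : supd V W <= supd V X + supd X W.
Proof.
apply: rb_supn_le => [|s]; first by rewrite addr_ge0 ?rb_supn_ge0.
rewrite (_ : V s - W s = (V s - X s) + (X s - W s)); last by ring.
exact: le_trans (ler_normD _ _) (lerD (ler_rb_supn _ _) (ler_rb_supn _ _)).
Qed.

Lemma supd_le0_eq V W : supd V W <= 0 -> V = W.
Proof.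
move=> VW0; apply/funext => s; apply/eqP; rewrite -subr_eq0 -normr_le0.
exact: le_trans (ler_rb_supn _ s) VW0.
Qed.

End SupNorm.

Lemma lb_cvg0_le0 (R : realType) (a : R) (u : nat -> R) :
  u @ \oo --> 0 -> (forall n, a <= u n) -> a <= 0.
Proof. by move=> u0 au; apply: (cvgr_to_ge u0); apply: nearW. Qed.

Lemma cvg_geometric_nonneg (R : realType) (K g : R) : 0 <= g < 1 ->
  (fun n => K * g ^+ n) @ \oo --> 0.
Proof. by case/andP=> g0 g1; apply: cvg_geometric; rewrite ger0_norm. Qed.

Lemma contracted_recursion_cvg0 (R : realType) (g : R) (a eps : nat -> R) : 0 <= g < 1 ->
  (forall n, 0 <= a n) -> (forall n, a n.+1 <= g * a n + eps n) ->
  eps @ \oo --> 0 -> a @ \oo --> 0.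
Proof.
move=> g01 a0 a_rec eps0; have /andP[g0 g1] := g01; apply/cvgrPdist_le => e e0.
have e2 : 0 < e / 2 by rewrite divr_gt0.
(* Perturbations below (1 - g) e/2 accumulate, geometrically damped, to at most e/2. *)
have e2g : 0 < e / 2 * (1 - g) by rewrite mulr_gt0 // subr_gt0.
have /cvgrPdist_le/(_ _ e2g)[N _ epsN] := eps0.
have a_tail k : a (N + k)%N <= a N * g ^+ k + e / 2.
  elim: k => [|k IH]; first by rewrite addn0 expr0 mulr1 lerDl ltW.
  rewrite addnS; apply: le_trans (a_rec _) _.
  have := epsN (N + k)%N (leq_addr _ _); rewrite /= sub0r normrN => eps_small.
  have := ler_wpM2l g0 IH; have := ler_norm (eps (N + k)%N).
  have -> : a N * g ^+ k.+1 + e / 2 = g * (a N * g ^+ k + e / 2) + e / 2 * (1 - g).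
    by rewrite exprS; ring.
  lra.
have /cvgrPdist_le/(_ _ e2)[K _ gK] := cvg_geometric_nonneg (a N) g01.
exists (N + K)%N => // t /= Kt.
have Nt : (N <= t)%N by apply: leq_trans Kt; exact: leq_addr.
have := gK (t - N)%N; rewrite /= leq_subRL // => /(_ Kt).
rewrite sub0r normrN => small_tail.
have := a_tail (t - N)%N; rewrite subnKC // sub0r normrN ger0_norm //.
have := ler_norm (a N * g ^+ (t - N)).
have : e = e / 2 + e / 2 by field.
lra.
Qed.

Section ContractionFixedPoint.
Variables (R : realType) (S : finType) (g : R) (T : (S -> R) -> (S -> R)).
Hypotheses (g01 : 0 <= g < 1) (T_contr : gamma_contraction g T).

Let g_ge0 : 0 <= g. Proof. by case/andP: g01. Qed.
Let g_lt1 : g < 1. Proof. by case/andP: g01. Qed.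

Let x n := iter n T (fun=> 0).
Let C := supd (x 1) (x 0) / (1 - g).

Let C_ge0 : 0 <= C.
Proof. by rewrite divr_ge0 ?rb_supn_ge0 ?subr_ge0 ?ltW. Qed.

Let Cg_ge0 n : 0 <= C * g ^+ n.
Proof. by rewrite mulr_ge0 ?exprn_ge0. Qed.

Lemma supd_iter_succ n : supd (x n.+1) (x n) <= C * (1 - g) * g ^+ n.
Proof.
rewrite mulfVK ?subr_eq0 ?gt_eqF //.
elim: n => [|n IH]; first by rewrite mulr1.
by rewrite exprS mulrCA; apply: le_trans (T_contr _ _) (ler_wpM2l g_ge0 IH).
Qed.

Lemma supd_iter_add n m : supd (x n) (x (n + m)%N) <= C * g ^+ n - C * g ^+ (n + m).
Proof.
elim: m => [|m IH].
  by rewrite addn0 subrr; apply: rb_supn_le => // s; rewrite subrr normr0.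
apply: le_trans (supd_triangle _ _ (x (n + m)%N)) _.
rewrite [X in _ + X]supd_sym addnS exprS.
have := supd_iter_succ (n + m).
have -> : C * (1 - g) * g ^+ (n + m) = C * g ^+ (n + m) - C * (g * g ^+ (n + m)) by ring.
lra.
Qed.

Lemma supd_iter n m : (n <= m)%N -> supd (x n) (x m) <= C * g ^+ n.
Proof.
move=> nm; rewrite -(subnKC nm); apply: le_trans (supd_iter_add _ _) _.
by rewrite lerBlDr lerDl.
Qed.

Lemma cvg_iter_coord s : cvgn (fun n => x n s).
Proof.
apply/cauchy_cvgP; apply: cauchy_exP => e e0.
have /cvgrPdist_lt/(_ e e0)[N _ CgN] := cvg_geometric_nonneg C g01.
exists (x N s); exists N => // n /= Nn; rewrite -ball_normE /=.
apply: le_lt_trans (ler_rb_supn (fun s => x N s - x n s) s) _.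
apply: le_lt_trans (supd_iter Nn) _.
by have := CgN N (leqnn N); rewrite /= sub0r normrN ger0_norm.
Qed.

Let L s := lim ((fun n => x n s) @ \oo).

Lemma supd_iter_lim n : supd (x n) L <= C * g ^+ n.
Proof.
apply: rb_supn_le => // s.
have xnL : (fun m => `|x n s - x m s|) @ \oo --> `|x n s - L s|.
  by apply: cvg_norm; apply: cvgB; [exact: cvg_cst | exact: cvg_iter_coord].
apply: (cvgr_to_le xnL); exists n => // m /= nm.
exact: le_trans (ler_rb_supn (fun s => x n s - x m s) s) (supd_iter nm).
Qed.

Lemma gamma_contraction_fix_exists : exists X, T X = X.
Proof.
exists L; apply: supd_le0_eq.
apply: (lb_cvg0_le0 (cvg_geometric_nonneg (2 * C) g01)) => n.
apply: le_trans (supd_triangle _ _ (x n.+1)) _.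
have TL : supd (T L) (x n.+1) <= g * (C * g ^+ n).
  by apply: le_trans (T_contr _ _) _; rewrite ler_wpM2l // supd_sym supd_iter_lim.
have := supd_iter_lim n.+1; rewrite exprS.
have : g * (C * g ^+ n) <= C * g ^+ n by rewrite ler_piMl // ltW.
have -> : C * (g * g ^+ n) = g * (C * g ^+ n) by ring.
lra.
Qed.

End ContractionFixedPoint.

Lemma gamma_contraction_fix_unique (R : realType) (S : finType) (g : R)
    (T : (S -> R) -> (S -> R)) V W :
  g < 1 -> gamma_contraction g T -> T V = V -> T W = W -> W = V.
Proof.
move=> g1 T_contr TV TW; apply: supd_le0_eq.
have := T_contr W V; rewrite TV TW => WV.
have : supd W V * (1 - g) <= 0 by rewrite mulrBr mulr1 subr_le0 mulrC.
by rewrite pmulr_lle0 // subr_gt0.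
Qed.

Lemma unif_conv_bounded_pointwise (R : realType) (S : finType)
    (Tt : nat -> (S -> R) -> (S -> R)) (T : (S -> R) -> (S -> R)) :
  unif_conv_bounded Tt T -> forall V, (fun t => supd (Tt t V) (T V)) @ \oo --> 0.
Proof.
move=> TtT V; apply/cvgrPdist_le => e e0.
have boundedV : rb_bounded [set V] by exists (rb_supn V) => _ ->.
have [N TtTV] := TtT _ boundedV e e0.
exists N => // t /= Nt.
by rewrite sub0r normrN ger0_norm ?rb_supn_ge0 // TtTV.
Qed.

Section LimitOfContractions.
Variables (R : realType) (S : finType) (g : R).
Variables (Tt : nat -> (S -> R) -> (S -> R)) (T : (S -> R) -> (S -> R)).
Hypothesis Tt_contr : forall t, gamma_contraction g (Tt t).
Hypothesis TtT : forall V, (fun t => supd (Tt t V) (T V)) @ \oo --> 0.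

Lemma gamma_contraction_limit : gamma_contraction g T.
Proof.
move=> V W; rewrite -subr_le0.
have errVW : (fun t => supd (Tt t V) (T V) + supd (Tt t W) (T W)) @ \oo --> 0.
  by rewrite -[0]addr0; apply: cvgD.
apply: (lb_cvg0_le0 errVW) => t /=.
have := supd_triangle (T V) (T W) (Tt t V); rewrite [supd (T V) (Tt t V)]supd_sym.
have := supd_triangle (Tt t V) (T W) (Tt t W).
have := Tt_contr t V W.
lra.
Qed.

Lemma iterV_cvg_fixpoint (Vs : S -> R) V0 : 0 <= g < 1 -> T Vs = Vs ->
  (fun t => supd (iterV Tt V0 t) Vs) @ \oo --> 0.
Proof.
move=> g01 TVs; apply: (contracted_recursion_cvg0 g01) (TtT Vs) => [n|n].
  exact: rb_supn_ge0.
rewrite TVs; apply: le_trans (supd_triangle _ _ (Tt n Vs)) _.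
by apply: lerD; first exact: Tt_contr.
Qed.

End LimitOfContractions.

Theorem theorem1 (R : realType) (S Act : finType) (A : S -> {set Act})
  (r : S -> Act -> R) (gamma : R)
  (d : measure_display) (Omega : measurableType d) (P : probability Omega R)
  (F : nat -> set (set Omega))
  (U : nat -> Omega -> S -> Act -> set (S -> R))
  (Tinf : Omega -> (S -> R) -> (S -> R)) :
  (forall s, A s != finset.set0) ->
  0 < gamma < 1 ->
  rb_filtration F ->
  (forall t w, rect_family A (U t w)) ->
  (forall t V s, G_measurable (F t) (fun w => rob_bellman A r gamma (U t w) V s)) ->
  (forall U' : S -> Act -> set (S -> R),
      rect_family A U' -> gamma_contraction gamma (rob_bellman A r gamma U')) ->
  {ae P, forall w, unif_conv_bounded (fun t => rob_bellman A r gamma (U t w)) (Tinf w)} ->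
  (forall w, unif_conv_bounded (fun t => rob_bellman A r gamma (U t w)) (Tinf w) ->
     gamma_contraction gamma (Tinf w)) /\
  exists Omega0 : set Omega, measurable Omega0 /\ P Omega0 = 1%E /\
    forall w, Omega0 w ->
      exists Vstar : S -> R,
        Tinf w Vstar = Vstar /\
        (forall W, Tinf w W = W -> W = Vstar) /\
        forall V0 : S -> R,
          (fun t => rb_supn (fun s => iterV (fun t => rob_bellman A r gamma (U t w)) V0 t s
                                   - Vstar s)) @ \oo --> 0.
Proof.
move=> _ /andP[g0 g1] _ U_rect _ rob_contr [N [mN PN0 conv_off_N]].
have g01 : 0 <= gamma < 1 by rewrite ltW.
pose Tt w t := rob_bellman A r gamma (U t w).
have Tt_contr w t : gamma_contraction gamma (Tt w t) by exact: rob_contr (U_rect t w).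
have Tinf_contr w : unif_conv_bounded (Tt w) (Tinf w) -> gamma_contraction gamma (Tinf w).
  move=> conv; apply: gamma_contraction_limit (Tt_contr w) _.
  exact: unif_conv_bounded_pointwise conv.
split=> //; exists (~` N); split; first exact: measurableC.
split; first by rewrite probability_setC // PN0 sube0.
move=> w Nw; have conv : unif_conv_bounded (Tt w) (Tinf w).
  by apply: contrapT => nconv; exact: Nw (conv_off_N w nconv).
have [Vs TVs] := gamma_contraction_fix_exists g01 (Tinf_contr w conv).
exists Vs; split=> //; split=> [W TW|V0].
  exact: gamma_contraction_fix_unique g1 (Tinf_contr w conv) TVs TW.
exact: iterV_cvg_fixpoint (Tt_contr w) (unif_conv_bounded_pointwise conv) _ _ g01 TVs.
Qed.
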